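(* Let $G=(V,E,w)$ be a connected weighted graph with $n$ vertices, and let $k\in\mathbb{R}$. Then $$ \sum_{\{s,t\}\subseteq V}\big(H^{(2k-1)}_{st}\big)^{2}=n\cdot\sum_{e\in E}w_e\cdot\big(H^{(2k)}_{e}\big)^{2}, $$ where the left sum is over unordered pairs of distinct vertices.
   Context: $G=(V,E,w)$ is undirected with positive edge weights $w_e$ and graph Laplacian $L=D-A$ (weighted degree matrix minus weighted adjacency matrix), with spectral decomposition $L=\sum_i\lambda_ix_ix_i^{T}$. For $k\in\mathbb{R}$, $(L^{+})^{k}:=\sum_{i:\lambda_i>0}\lambda_i^{-k}x_ix_i^{T}$. With $1_v$ the indicator vector of vertex $v$, the $k$-harmonic distance is $H^{(k)}_{st}=\sqrt{(1_s-1_t)^{T}(L^{+})^{k}(1_s-1_t)}$, and $H^{(k)}_e:=H^{(k)}_{st}$ for an edge $e=\{s,t\}$. *)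

From HB Require Import structures.
From mathcomp Require Import all_boot all_order all_algebra.
From mathcomp Require Import reals exp.
Set Implicit Arguments. Unset Strict Implicit. Unset Printing Implicit Defensive.
Import Order.TTheory GRing.Theory Num.Theory.
Local Open Scope ring_scope.

(* Weighted graph on vertex set 'I_n given by a weight function w;
   {s,t} is an edge iff 0 < w s t. *)
Definition edge_rel (R : realType) (n : nat) (w : 'I_n -> 'I_n -> R) : rel 'I_n :=
  fun i j => 0 < w i j.

Definition laplacian (R : realType) (n : nat) (w : 'I_n -> 'I_n -> R) : 'M[R]_n :=
  \matrix_(i, j) ((i == j)%:R * (\sum_(l < n) w i l) - w i j).

Definition spectral_decomp (R : realType) (n : nat) (L U : 'M[R]_n) (lam : 'I_n -> R) :=
  U^T *m U = 1%:M /\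
  L = \sum_(i < n) lam i *: (col i U *m (col i U)^T).

Definition pinv_pow (R : realType) (n : nat) (U : 'M[R]_n) (lam : 'I_n -> R) (k : R)
  : 'M[R]_n :=
  \sum_(i < n | 0 < lam i) (lam i `^ (- k)) *: (col i U *m (col i U)^T).

Definition indic_diff (R : realType) (n : nat) (s t : 'I_n) : 'cV[R]_n :=
  \col_j ((j == s)%:R - (j == t)%:R).

Definition harm_dist (R : realType) (n : nat) (U : 'M[R]_n) (lam : 'I_n -> R) (k : R)
  (s t : 'I_n) : R :=
  Num.sqrt ((((indic_diff R s t)^T *m pinv_pow U lam k *m indic_diff R s t)) 0 0).

From HB Require Import structures.
From mathcomp Require Import all_boot all_order all_algebra.
From mathcomp Require Import reals exp ring lra.
(* Expanding in the eigenbasis,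
   (H^(k)_st)^2 = sum_(lam_i > 0) lam_i^(-k) (u_i s - u_i t)^2.
   A unit eigenvector u with lam > 0 is orthogonal to the all-ones kernel vector
   of L, so Lagrange's identity gives sum_(s<t) (u s - u t)^2 = n, while the
   Laplacian quadratic form gives sum_(st in E) w_st (u s - u t)^2 = u^T L u = lam.
   Hence both sides equal n * sum_(lam_i > 0) lam_i^(1 - 2k). *)

Set Implicit Arguments.
Unset Strict Implicit.
Unset Printing Implicit Defensive.

Import Order.TTheory GRing.Theory Num.Theory.
Local Open Scope ring_scope.

Lemma sumr_delta (V : nmodType) (I : finType) (i : I) (F : I -> V) :
  \sum_j F j *+ (j == i) = F i.
Proof.
rewrite (bigD1 i) //= eqxx mulr1n big1 ?addr0 // => j /negbTE ->.
exact: mulr0n.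
Qed.

Section PairSums.
Variables (R : numFieldType) (n : nat).

Lemma sum_ltn_pairs_sym (f : 'I_n -> 'I_n -> R) :
  (forall s t, f s t = f t s) -> (forall s, f s s = 0) ->
  \sum_(s < n) \sum_(t < n | (s < t)%N) f s t = (\sum_s \sum_t f s t) / 2.
Proof.
move=> fC f0.
have splitE : \sum_s \sum_t f s t =
    \sum_(s < n) \sum_(t < n) (if (s < t)%N then f s t else 0) +
    \sum_(s < n) \sum_(t < n) (if (t < s)%N then f s t else 0).
  rewrite -big_split; apply: eq_bigr => s _.
  rewrite -big_split; apply: eq_bigr => t _ /=.
  by case: (ssrnat.ltngtP s t) => [||/ord_inj ->]; rewrite ?addr0 ?add0r ?f0.
have lowerE : \sum_(s < n) \sum_(t < n) (if (t < s)%N then f s t else 0) =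
              \sum_(s < n) \sum_(t < n) (if (s < t)%N then f s t else 0).
  by rewrite exchange_big; apply: eq_bigr => s _; apply: eq_bigr => t _; rewrite fC.
rewrite splitE lowerE -mulr2n -[_ *+ 2]mulr_natr mulfK ?pnatr_eq0 //.
by apply: eq_bigr => s _; rewrite big_mkcond.
Qed.

Lemma sum_sqr_diff (a : 'I_n -> R) :
  \sum_s \sum_t (a s - a t) ^+ 2 = 2 * (n%:R * \sum_s a s ^+ 2 - (\sum_s a s) ^+ 2).
Proof.
have sum_const_n (x : R) : \sum_(t < n) x = n%:R * x.
  by rewrite sumr_const card_ord mulr_natl.
transitivity (\sum_s \sum_t (a s ^+ 2 + a t ^+ 2) - 2 * \sum_s \sum_t a s * a t).
  rewrite mulr_sumr -sumrB; apply: eq_bigr => s _.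
  rewrite mulr_sumr -sumrB; apply: eq_bigr => t _; ring.
rewrite -big_distrlr /=.
under eq_bigr do rewrite big_split /= sum_const_n.
by rewrite big_split /= sum_const_n -mulr_sumr; ring.
Qed.

End PairSums.

Lemma col_quad_formE (R : comPzRingType) n (M A : 'M[R]_n) i :
  ((col i A)^T *m M *m col i A) 0 0 = \sum_s \sum_t A s i * M s t * A t i.
Proof.
rewrite mxE exchange_big; apply: eq_bigr => s _; rewrite mxE big_distrl /=.
by apply: eq_bigr => t _; rewrite !mxE.
Qed.

Section Laplacian.
Variables (R : realType) (n : nat) (w : 'I_n -> 'I_n -> R).
Hypothesis wC : forall s t, w s t = w t s.

Lemma laplacian_row_quad (a : 'I_n -> R) s :
  \sum_t a s * laplacian w s t * a t = \sum_t w s t * a s * (a s - a t).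
Proof.
under eq_bigr do rewrite mxE mulrBr mulrBl mulrCA -mulrA eq_sym mulr_natl.
under [RHS]eq_bigr do rewrite mulrBr.
rewrite !sumrB sumr_delta mulr_sumr mulr_suml.
by congr (_ - _); apply: eq_bigr => t _; ring.
Qed.

Lemma laplacian_quad (a : 'I_n -> R) :
  \sum_s \sum_t w s t * (a s - a t) ^+ 2 =
  2 * \sum_s \sum_t a s * laplacian w s t * a t.
Proof.
have swapE : \sum_s \sum_t w s t * a s * (a s - a t) =
             \sum_s \sum_t w s t * a t * (a t - a s).
  by rewrite exchange_big; apply: eq_bigr => s _; apply: eq_bigr => t _; rewrite wC.
under [in RHS]eq_bigr do rewrite laplacian_row_quad.
rewrite mulr_natl mulr2n {2}swapE -big_split; apply: eq_bigr => s _.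
by rewrite -big_split; apply: eq_bigr => t _ /=; ring.
Qed.

Lemma ones_mul_laplacian : (const_mx 1 : 'rV[R]_n) *m laplacian w = 0.
Proof.
apply/rowP => t; rewrite !mxE.
under eq_bigr do rewrite !mxE mul1r mulr_natl.
rewrite sumrB sumr_delta; apply/eqP; rewrite subr_eq0; apply/eqP.
by apply: eq_bigr => s _; rewrite wC.
Qed.

End Laplacian.

Section OrthonormalColumns.
Variables (R : comPzRingType) (n : nat) (U : 'M[R]_n).
Hypothesis U_orth : U^T *m U = 1%:M.

Lemma col_dot i j : (col i U)^T *m col j U = (i == j)%:R%:M.
Proof.
apply/matrixP => a b; rewrite [a]ord1 [b]ord1 [RHS]mxE mulr1n.
transitivity ((U^T *m U) i j); last by rewrite U_orth mxE.
by rewrite !mxE; apply: eq_bigr => s _; rewrite !mxE.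
Qed.

Lemma col_sqr_sum i : \sum_s U s i ^+ 2 = 1.
Proof.
transitivity (((col i U)^T *m col i U) 0 0); last by rewrite col_dot eqxx mxE.
by rewrite mxE; apply: eq_bigr => s _; rewrite !mxE expr2.
Qed.

End OrthonormalColumns.

Section SpectralDecomposition.
Variables (R : realType) (n : nat) (L U : 'M[R]_n) (lam : 'I_n -> R).
Hypothesis decL : spectral_decomp L U lam.

Lemma spectral_eigvec i : L *m col i U = lam i *: col i U.
Proof.
have colE j :
    lam j *: (col j U *m (col j U)^T) *m col i U = (lam j *: col j U) *+ (j == i).
  rewrite -scalemxAl -mulmxA (col_dot decL.1) mul_mx_scalar.
  by rewrite scalerA mulrC -scalerA scaler_nat.
by rewrite decL.2 mulmx_suml (eq_bigr _ (fun j _ => colE j)) sumr_delta.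
Qed.

Lemma spectral_rayleigh i : (col i U)^T *m L *m col i U = (lam i)%:M.
Proof. by rewrite -mulmxA spectral_eigvec -scalemxAr (col_dot decL.1) eqxx scalemx1. Qed.

Lemma spectral_col_sum0 i :
  (const_mx 1 : 'rV[R]_n) *m L = 0 -> lam i != 0 -> \sum_s U s i = 0.
Proof.
move=> onesL lam_neq0.
have /matrixP/(_ 0 0) := congr1 (mulmx^~ (col i U)) onesL.
rewrite -mulmxA spectral_eigvec -scalemxAr mul0mx !mxE => /eqP.
rewrite mulf_eq0 (negbTE lam_neq0) /= => /eqP; apply: etrans.
by apply: eq_bigr => s _; rewrite !mxE mul1r.
Qed.

End SpectralDecomposition.

Section HarmonicDistance.
Variables (R : realType) (n : nat) (U : 'M[R]_n) (lam : 'I_n -> R).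

Lemma indic_diff_mul_col s t i :
  (indic_diff R s t)^T *m col i U = (U s i - U t i)%:M.
Proof.
apply/matrixP => a b; rewrite [a]ord1 [b]ord1 !mxE mulr1n.
under eq_bigr do rewrite !mxE mulrBl !mulr_natl.
by rewrite sumrB !sumr_delta.
Qed.

Lemma harm_dist_sqr k s t :
  harm_dist U lam k s t ^+ 2 =
  \sum_(i | 0 < lam i) lam i `^ (- k) * (U s i - U t i) ^+ 2.
Proof.
set e := indic_diff R s t.
have quadE : (e^T *m pinv_pow U lam k *m e) 0 0 =
             \sum_(i | 0 < lam i) lam i `^ (- k) * (U s i - U t i) ^+ 2.
  rewrite /pinv_pow mulmx_sumr mulmx_suml summxE; apply: eq_bigr => i _.
  have trE : (col i U)^T *m e = (e^T *m col i U)^T by rewrite trmx_mul trmxK.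
  rewrite -scalemxAr -scalemxAl mulmxA -[e^T *m _ *m _ *m e]mulmxA trE.
  by rewrite indic_diff_mul_col tr_scalar_mx -scalar_mxM !mxE mulr1n expr2.
rewrite /harm_dist quadE sqr_sqrtr // sumr_ge0 // => i _.
by rewrite mulr_ge0 ?powR_ge0 ?sqr_ge0.
Qed.

Lemma sum_harm_dist_sqr k (P : 'I_n -> 'I_n -> bool) (c : 'I_n -> 'I_n -> R) :
  \sum_(s < n) \sum_(t < n | P s t) c s t * harm_dist U lam k s t ^+ 2 =
  \sum_(i | 0 < lam i) lam i `^ (- k) *
    \sum_(s < n) \sum_(t < n | P s t) c s t * (U s i - U t i) ^+ 2.
Proof.
under eq_bigr do under eq_bigr do rewrite harm_dist_sqr mulr_sumr.
under eq_bigr do rewrite exchange_big /=.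
rewrite exchange_big /=; apply: eq_bigr => i _.
rewrite mulr_sumr; apply: eq_bigr => s _; rewrite mulr_sumr.
by apply: eq_bigr => t _; rewrite mulrCA.
Qed.

End HarmonicDistance.

Lemma sum_edge_rel (R : realType) n (w : 'I_n -> 'I_n -> R) (P : pred 'I_n)
    (F : 'I_n -> R) s :
  (forall t, 0 <= w s t) ->
  \sum_(t | P t && edge_rel w s t) w s t * F t = \sum_(t | P t) w s t * F t.
Proof.
move=> w_ge0; rewrite [RHS](bigID (edge_rel w s)) /= [X in _ + X]big1 ?addr0 //.
move=> t /andP[_]; rewrite /edge_rel lt_def w_ge0 andbT negbK => /eqP ->.
exact: mul0r.
Qed.

Lemma powRN_sub1 (R : realType) (x a : R) :
  0 < x -> x `^ (- (a - 1)) = x `^ (- a) * x.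
Proof.
move=> x_gt0; rewrite opprB addrC powRD ?powRr1 ?ltW //.
by rewrite (gt_eqF x_gt0) implybT.
Qed.

Section LaplacianEigenvectors.
Variables (R : realType) (n : nat) (w : 'I_n -> 'I_n -> R).
Variables (U : 'M[R]_n) (lam : 'I_n -> R).
Hypotheses (w_ge0 : forall s t, 0 <= w s t) (wC : forall s t, w s t = w t s).
Hypothesis decL : spectral_decomp (laplacian w) U lam.

Lemma eigvec_sum_pairs i : lam i != 0 ->
  \sum_(s < n) \sum_(t < n | (s < t)%N) (U s i - U t i) ^+ 2 = n%:R.
Proof.
move=> lam_neq0.
rewrite sum_ltn_pairs_sym => [||s]; last by rewrite subrr expr0n.
  rewrite sum_sqr_diff (col_sqr_sum decL.1).
  by rewrite (spectral_col_sum0 decL (ones_mul_laplacian wC)) //; lra.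
by move=> s t; rewrite -opprB sqrrN.
Qed.

Lemma eigvec_sum_edges i :
  \sum_(s < n) \sum_(t < n | (s < t)%N && edge_rel w s t)
    w s t * (U s i - U t i) ^+ 2 = lam i.
Proof.
under eq_bigr do rewrite (sum_edge_rel (fun t => (_ < t)%N)) //.
rewrite sum_ltn_pairs_sym => [||s]; last by rewrite subrr expr0n mulr0.
  rewrite laplacian_quad // -col_quad_formE (spectral_rayleigh decL).
  by rewrite mxE eqxx mulr1n; lra.
by move=> s t; rewrite -opprB sqrrN wC.
Qed.

End LaplacianEigenvectors.

Theorem theorem6p3 (R : realType) (n : nat) (w : 'I_n -> 'I_n -> R)
  (U : 'M[R]_n) (lam : 'I_n -> R) (k : R) :
  (forall i j, 0 <= w i j) ->
  (forall i j, w i j = w j i) ->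
  (forall i, w i i = 0) ->
  (forall s t : 'I_n, connect (edge_rel w) s t) ->
  spectral_decomp (laplacian w) U lam ->
  \sum_(s < n) \sum_(t < n | (s < t)%N) (harm_dist U lam (2 * k - 1) s t) ^+ 2
  = n%:R * \sum_(s < n) \sum_(t < n | ((s < t)%N && edge_rel w s t))
             w s t * (harm_dist U lam (2 * k) s t) ^+ 2.
Proof.
move=> w_ge0 wC _ _ decL.
transitivity (\sum_(s < n) \sum_(t < n | (s < t)%N)
                1 * harm_dist U lam (2 * k - 1) s t ^+ 2).
  by apply: eq_bigr => s _; apply: eq_bigr => t _; rewrite mul1r.
rewrite !sum_harm_dist_sqr mulr_sumr; apply: eq_bigr => i lam_gt0.
under eq_bigr do under eq_bigr do rewrite mul1r.
rewrite (eigvec_sum_pairs wC decL) ?(gt_eqF lam_gt0) //.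
by rewrite (eigvec_sum_edges w_ge0 wC decL) powRN_sub1 // mulrC.
Qed.
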